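(* In the setting below, an invertible linear operator on $U^*\oplus U$ belongs to the Mackey group $G_U=G(U^*\oplus U,U^*\oplus U)$ if and only if it is given by left multiplication by a matrix $\psi\in J$ with $\psi$ invertible and $\psi^{-1}\in J$. In other words, $G_U=\widetilde{G}_U$.
   Context: $U$ is a complex vector space with basis $\{e_1,e_2,\dots\}$. Elements of $U^*\oplus U$ are written as pairs $(\gamma,y)$ with $\gamma=(\dots,\gamma_{-2},\gamma_{-1})$ an arbitrary sequence indexed by $\mathbb{Z}_{<0}$ ($\gamma_{-i}=\gamma(e_i)$) and $y=(y_1,y_2,\dots)$ a finitary sequence (finitely many nonzero entries), regarded as a column vector indexed by the ordered set $\mathbb{Z}\setminus\{0\}=\mathbb{Z}_{<0}\sqcup\mathbb{Z}_{>0}$. $U^*\oplus U$ carries the nondegenerate pairing $\langle(\gamma,y),(\varkappa,z)\rangle=\gamma(z)+\varkappa(y)$, and $G(U^*\oplus U,U^*\oplus U)$ is the group of invertible linear $\varphi$ on $U^*\oplus U$ such that $\varphi^*$ maps $U^*\oplus U$ (embedded in $(U^*\oplus U)^*$ via the pairing) onto itself. (This is the Mackey group $G(V_E,V_{*E})$ for $V_E=(W_* )^*\oplus U$, $V_{*E}=W_*\oplus U^*$ under an identification $W_*\cong U$.) $J$ is the set of matrices $M$ with rows and columns indexed by $\mathbb{Z}\setminus\{0\}$, written in blocks $\begin{pmatrix}A&B\\ C&D\end{pmatrix}$ according to $\mathbb{Z}_{<0}\sqcup\mathbb{Z}_{>0}$, such that each row of $A$ is finitary, each column of $D$ is finitary,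 and $C$ has finitely many nonzero entries; such matrices act on $U^*\oplus U$ by left multiplication on columns. $\widetilde{G}_U$ is the group of automorphisms of $U^*\oplus U$ given by matrices $\psi$ with $\psi,\psi^{-1}\in J$. *)

From HB Require Import structures.
From mathcomp Require Import all_boot all_algebra.
From mathcomp Require Import classical_sets fsbigop reals.
From mathcomp Require Export complex.

Set Implicit Arguments.
Unset Strict Implicit.
Unset Printing Implicit Defensive.
Import GRing.Theory.
Local Open Scope classical_set_scope.
Local Open Scope ring_scope.

(* Conventions:
   - the scalar field is C = R[i] for R : realType;
   - an element (gamma, y) of U^* (+) U is encoded by two sequences
     nat -> K: gamma k = gamma_{-(k+1)} = gamma(e_{k+1}) and
     y k = y_{k+1}; y is finitary;
   - the index set Z\{0} is encoded by idx := nat + nat,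
     inl k <-> -(k+1) (in Z_{<0}), inr k <-> k+1 (in Z_{>0}). *)

Definition finitary (K : nzRingType) (y : nat -> K) : Prop :=
  exists N : nat, forall n : nat, (N <= n)%N -> y n = 0.

Record V (K : nzRingType) := mkV {
  vdual : nat -> K ;
  vfin  : nat -> K ;
  vfinP : finitary vfin }.

Lemma finitaryD (K : nzRingType) (y z : nat -> K) :
  finitary y -> finitary z -> finitary (fun n => y n + z n).
Proof.
move=> [N HN] [M HM]; exists (maxn N M) => n Hn.
rewrite HN ?HM ?addr0 //.
  by apply: leq_trans Hn; rewrite leq_maxr.
by apply: leq_trans Hn; rewrite leq_maxl.
Qed.

Lemma finitaryZ (K : nzRingType) (a : K) (y : nat -> K) :
  finitary y -> finitary (fun n => a * y n).
Proof. by move=> [N HN]; exists N => n Hn; rewrite HN ?mulr0. Qed.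

Definition vadd (K : nzRingType) (v w : V K) : V K :=
  @mkV K (fun n => vdual v n + vdual w n) (fun n => vfin v n + vfin w n)
    (finitaryD (vfinP v) (vfinP w)).

Definition vscale (K : nzRingType) (a : K) (v : V K) : V K :=
  @mkV K (fun n => a * vdual v n) (fun n => a * vfin v n)
    (finitaryZ a (vfinP v)).

Definition is_linear (K : nzRingType) (phi : V K -> V K) : Prop :=
  forall (a : K) (v w : V K), phi (vadd (vscale a v) w) = vadd (vscale a (phi v)) (phi w).

Definition pairing (K : nzRingType) (v w : V K) : K :=
  \sum_(i \in [set: nat]) (vdual v i * vfin w i + vdual w i * vfin v i).

(* phi^* sends the functional <w, .> to the functional <w', .> *)
Definition adj_rel (K : nzRingType) (phi : V K -> V K) (w w' : V K) : Prop :=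
  forall v : V K, pairing w (phi v) = pairing w' v.

(* The Mackey group G(U^* (+) U, U^* (+) U): invertible linear phi such that
   phi^* maps U^* (+) U (embedded in (U^* (+) U)^* via the pairing) onto itself *)
Definition in_GU (K : nzRingType) (phi : V K -> V K) : Prop :=
  [/\ is_linear phi, bijective phi,
      (forall w : V K, exists w' : V K, adj_rel phi w w') &
      (forall w' : V K, exists w : V K, adj_rel phi w w')].

Definition idx := (nat + nat)%type.
Definition mat (K : nzRingType) := idx -> idx -> K.

(* the set J: rows of A finitary, columns of D finitary, C finitely many
   nonzero entries. Blocks: A = M (inl _) (inl _), B = M (inl _) (inr _),
   C = M (inr _) (inl _), D = M (inr _) (inr _). *)
Definition in_J (K : nzRingType) (M : mat K) : Prop :=
  [/\ (forall i : nat, finitary (fun j => M (inl i) (inl j))),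
      (forall j : nat, finitary (fun i => M (inr i) (inr j))) &
      (exists N : nat, forall i j : nat, (N <= i)%N \/ (N <= j)%N ->
          M (inr i) (inl j) = 0)].

Definition mat_action (K : nzRingType) (M : mat K) (phi : V K -> V K) : Prop :=
  forall (v : V K) (i : nat),
    vdual (phi v) i =
      \sum_(j \in [set: nat]) (M (inl i) (inl j) * vdual v j)
      + \sum_(j \in [set: nat]) (M (inl i) (inr j) * vfin v j)
    /\ vfin (phi v) i =
      \sum_(j \in [set: nat]) (M (inr i) (inl j) * vdual v j)
      + \sum_(j \in [set: nat]) (M (inr i) (inr j) * vfin v j).

Definition in_GtildeU (K : nzRingType) (phi : V K -> V K) : Prop :=
  exists (psi psi' : mat K) (phi' : V K -> V K),
    [/\ is_linear phi, cancel phi phi', cancel phi' phi,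
        in_J psi /\ mat_action psi phi &
        in_J psi' /\ mat_action psi' phi'].

(* If [phi] has an adjoint that maps U^* (+) U into itself, then [phi] is the
   matrix whose rows are the adjoint images of the coordinate functionals.
   Rows of A and columns of D are then finitary; so are the rows and columns of
   C, and moreover C sends every sequence to a finitary one, which by a
   diagonal argument forces C to have finitely many nonzero entries.
   Conversely, a matrix [psi] in J has the transposed matrix as adjoint: the
   pairing of w with [psi v] is a sum of four double sums, one per block, each
   finitely supported because of the conditions defining J, so the order of
   summation may be exchanged.  Applying both directions to [phi] and its
   inverse (whose adjoint is the inverse of the adjoint) gives the theorem. *)

From HB Require Import structures.
From mathcomp Require Import all_boot all_algebra.
From mathcomp Require Import classical_sets fsbigop reals complex.
From mathcomp Require Import boolp.
Set Implicit Arguments.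
Unset Strict Implicit.
Unset Printing Implicit Defensive.
Import GRing.Theory.
Local Open Scope classical_set_scope.
Local Open Scope ring_scope.

Section FiniteSums.
Variable K : nzRingType.
Implicit Types (f g : nat -> K) (M : nat -> nat -> K).

Definition finsupp2 M : Prop :=
  exists N : nat, forall i j, (N <= i)%N \/ (N <= j)%N -> M i j = 0.

Lemma fsumT_ord f L : (forall n, (L <= n)%N -> f n = 0) ->
  \sum_(i \in [set: nat]) f i = \sum_(i < L) f i.
Proof.
move=> fL; rewrite fsbig_ord; apply/esym/fsbig_widen => // n [_ /negP].
by rewrite -leqNgt => /fL.
Qed.

Lemma fsumT1 f a : (forall n, n != a -> f n = 0) ->
  \sum_(i \in [set: nat]) f i = f a.
Proof.
move=> fa; rewrite -(fsbig_widen [set a]) ?fsbig_set1 // => n [_ /eqP].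
exact: fa.
Qed.

Lemma fsumD f g : finitary f -> finitary g ->
  \sum_(i \in [set: nat]) (f i + g i) =
  \sum_(i \in [set: nat]) f i + \sum_(i \in [set: nat]) g i.
Proof.
move=> [N fN] [L gL]; have fg0 n : (maxn N L <= n)%N -> f n = 0 /\ g n = 0.
  by rewrite geq_max => /andP[/fN ? /gL ?].
rewrite !(fsumT_ord (L := maxn N L)) ?big_split // => n /fg0[fn gn].
all: by rewrite ?fn ?gn ?addr0.
Qed.

Lemma fsum2T_ord M N : (forall i j, (N <= i)%N \/ (N <= j)%N -> M i j = 0) ->
  \sum_(i \in [set: nat]) \sum_(j \in [set: nat]) M i j =
  \sum_(i < N) \sum_(j < N) M i j.
Proof.
move=> MN; rewrite (fsumT_ord (L := N)) => [|i Ni].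
  apply: eq_bigr => i _; rewrite (fsumT_ord (L := N)) // => j Nj.
  by apply: MN; right.
by rewrite fsbig1 // => j _; apply: MN; left.
Qed.

Lemma exchange_fsumT M : finsupp2 M ->
  \sum_(i \in [set: nat]) \sum_(j \in [set: nat]) M i j =
  \sum_(j \in [set: nat]) \sum_(i \in [set: nat]) M i j.
Proof.
move=> [N MN]; rewrite (fsum2T_ord MN) exchange_big (fsum2T_ord (N := N)) //.
by move=> j i /or_comm /MN.
Qed.

Lemma uniformly_finitary M N : (forall i, finitary (M i)) ->
  exists L, forall i j, (i < N)%N -> (L <= j)%N -> M i j = 0.
Proof.
move=> Mfin; elim: N => [|N [L ML]]; first by exists 0%N.
have [L' ML'] := Mfin N; exists (maxn L L') => i j; rewrite ltnS leq_eqVlt geq_max.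
by case/orP => [/eqP -> /andP[_ /ML']|iN /andP[/(ML _ _ iN)]].
Qed.

Lemma finitaryMl f g : finitary g -> finitary (fun n => f n * g n).
Proof. by move=> [N gN]; exists N => n /gN ->; rewrite mulr0. Qed.

Lemma finitaryMr f g : finitary f -> finitary (fun n => f n * g n).
Proof. by move=> [N fN]; exists N => n /fN ->; rewrite mul0r. Qed.

Lemma finsupp2_mid f M g : finsupp2 M -> finsupp2 (fun i j => f i * M i j * g j).
Proof. by move=> [N MN]; exists N => i j /MN ->; rewrite mulr0 mul0r. Qed.

Lemma finsupp2_rows f M g : finitary f ->
  (forall i, finitary (fun j => M i j * g j)) ->
  finsupp2 (fun i j => f i * M i j * g j).
Proof.
move=> [N fN] /(uniformly_finitary N) [L ML]; exists (maxn N L) => i j.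
case: (ltnP i N) => [iN|/fN ->]; last by rewrite !mul0r.
rewrite !geq_max leqNgt iN -mulrA => -[//|/andP[_ /(ML _ _ iN) ->]].
by rewrite mulr0.
Qed.

Lemma finsupp2_cols f M g : finitary g ->
  (forall j, finitary (fun i => f i * M i j)) ->
  finsupp2 (fun i j => f i * M i j * g j).
Proof.
move=> [N gN] /(uniformly_finitary N) [L ML]; exists (maxn N L) => i j.
case: (ltnP j N) => [jN|/gN ->]; last by rewrite mulr0.
rewrite !geq_max [(N <= j)%N]leqNgt jN => -[/andP[_ /(ML _ _ jN) ->]|/andP[//]].
by rewrite mul0r.
Qed.

End FiniteSums.

(* Over a domain, [a * \sum_i F i = \sum_i a * F i] holds even when [F] has
   infinite support (both sides then take the junk value 0), so only the
   support of the full product [f i * M i j * g j] matters below. *)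
Section Transpose.
Variable K : idomainType.
Implicit Types (f g : nat -> K) (M : nat -> nat -> K).

Lemma finitary_mulr_fsum f M g : finsupp2 (fun i j => f i * M i j * g j) ->
  finitary (fun i => f i * \sum_(j \in [set: nat]) M i j * g j).
Proof.
move=> [N fMg]; exists N => i Ni; rewrite mulr_fsumr fsbig1 // => j _.
by rewrite mulrA fMg //; left.
Qed.

Lemma finitary_fsum_mulr f M g : finsupp2 (fun i j => f i * M i j * g j) ->
  finitary (fun j => (\sum_(i \in [set: nat]) f i * M i j) * g j).
Proof.
move=> [N fMg]; exists N => j Nj; rewrite mulr_fsuml fsbig1 // => i _.
by rewrite fMg //; right.
Qed.

Lemma fsum_transpose f M g : finsupp2 (fun i j => f i * M i j * g j) ->
  \sum_(i \in [set: nat]) f i * (\sum_(j \in [set: nat]) M i j * g j) =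
  \sum_(j \in [set: nat]) (\sum_(i \in [set: nat]) f i * M i j) * g j.
Proof.
move=> [N fMg]; under eq_fsbigr do rewrite mulr_fsumr.
rewrite exchange_fsumT; last by exists N => i j /fMg; rewrite mulrA.
apply: eq_fsbigr => j _; rewrite mulr_fsuml.
by apply: eq_fsbigr => i _; rewrite mulrA.
Qed.

End Transpose.

(* If [C] has finitely supported rows and columns, pick nonzero entries
   [C (diag_row k) (diag_col k)] successively beyond the supports of all the
   earlier rows and columns; then [C] is "diagonal" on them, and the indicator
   of the chosen columns is sent to a sequence with infinite support. *)
Section DiagonalArgument.
Variables (K : nzRingType) (C : nat -> nat -> K) (rb cb : nat -> nat).
Variable entry : nat -> nat * nat.
Hypothesis C_row : forall i j, (rb i <= j)%N -> C i j = 0.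
Hypothesis C_col : forall j i, (cb j <= i)%N -> C i j = 0.
Hypothesis entry_spec : forall b, [/\ (b <= (entry b).1)%N, (b <= (entry b).2)%N
  & C (entry b).1 (entry b).2 != 0].

Definition next_diag_bound b :=
  maxn b.+1 (maxn (cb (entry b).2) (rb (entry b).1)).
Definition diag_bound k := iter k next_diag_bound 0%N.
Definition diag_row k := (entry (diag_bound k)).1.
Definition diag_col k := (entry (diag_bound k)).2.

Lemma diag_bound_ge k : (k <= diag_bound k)%N.
Proof. by elim: k => // k IH; apply: leq_trans (leq_maxl _ _). Qed.

Lemma diag_bound_homo : {homo diag_bound : k l / (k <= l)%N}.
Proof.
apply: homo_leq; [exact: leqnn | exact: leq_trans | move=> k].
exact: leq_trans (leqnSn _) (leq_maxl _ _).
Qed.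

Lemma diag_offdiag k l : k != l -> C (diag_row k) (diag_col l) = 0.
Proof.
rewrite neq_ltn => /orP[kl|lk].
- apply: C_row; have [_ + _] := entry_spec (diag_bound l); apply: leq_trans.
  apply: leq_trans (diag_bound_homo kl); rewrite /= /next_diag_bound.
  by rewrite !leq_max leqnn !orbT.
- apply: C_col; have [+ _ _] := entry_spec (diag_bound k); apply: leq_trans.
  apply: leq_trans (diag_bound_homo lk); rewrite /= /next_diag_bound.
  by rewrite !leq_max leqnn !orbT.
Qed.

Definition diag_test (j : nat) : K := (`[< exists k, diag_col k = j >])%:R.

Lemma diag_test_sum k :
  \sum_(j \in [set: nat]) C (diag_row k) j * diag_test j =
  C (diag_row k) (diag_col k).
Proof.
rewrite (fsumT1 (a := diag_col k)) => [|j jk].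
  by rewrite /diag_test asboolT ?mulr1 //; exists k.
rewrite /diag_test; case: asboolP => [[l lj]|_]; last by rewrite mulr0.
by rewrite -lj diag_offdiag ?mul0r //; apply: contraNneq jk => ->; rewrite lj.
Qed.

Lemma diag_test_not_finitary :
  ~ finitary (fun i => \sum_(j \in [set: nat]) C i j * diag_test j).
Proof.
move=> [N testN]; have [lb _ Cneq0] := entry_spec (diag_bound N).
move: Cneq0; rewrite -[C _ _]/(C (diag_row N) (diag_col N)) -diag_test_sum.
by rewrite testN ?eqxx //; exact: leq_trans (diag_bound_ge N) lb.
Qed.

End DiagonalArgument.

Lemma nonzero_entry_beyond (K : nzRingType) (C : nat -> nat -> K) :
  (forall i, finitary (C i)) -> (forall j, finitary (fun i => C i j)) ->
  ~ finsupp2 C -> forall b, exists p : nat * nat,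
    [/\ (b <= p.1)%N, (b <= p.2)%N & C p.1 p.2 != 0].
Proof.
move=> Crow Ccol Cinf b; apply: contrapT => Cbox; apply: Cinf.
have [Lr CLr] := uniformly_finitary b Crow.
have [Lc CLc] := uniformly_finitary b Ccol.
exists (maxn b (maxn Lr Lc)) => i j; rewrite !geq_max.
case: (ltnP i b) => [ib|bi] ij.
  by rewrite CLr //; case: ij => /and3P[bi ? ?] //; rewrite leqNgt ib in bi.
case: (ltnP j b) => [jb|bj].
  by rewrite CLc //; case: ij => /and3P[bj ? ?] //; rewrite leqNgt jb in bj.
by apply/eqP/negPn/negP => Cij; apply: Cbox; exists (i, j).
Qed.

Lemma finsupp2_of_finitary_mul (K : nzRingType) (C : nat -> nat -> K) :
  (forall i, finitary (C i)) -> (forall j, finitary (fun i => C i j)) ->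
  (forall g, finitary (fun i => \sum_(j \in [set: nat]) C i j * g j)) ->
  finsupp2 C.
Proof.
move=> Crow Ccol Cg; apply: contrapT => Cinf.
have [rb Crb] := choice Crow; have [cb Ccb] := choice Ccol.
have [entry entryP] := choice (nonzero_entry_beyond Crow Ccol Cinf).
exact: diag_test_not_finitary Crb Ccb entryP (Cg _).
Qed.

Section CoordinateVectors.
Variable K : nzRingType.

Definition delta (i : nat) : nat -> K := fun n => (n == i)%:R.

Lemma finitary_delta i : finitary (delta i).
Proof.
by exists i.+1 => n; rewrite ltnNge /delta; case: eqP => // ->; rewrite leqnn.
Qed.

Lemma finitary0 : finitary (fun _ : nat => 0 : K).
Proof. by exists 0%N. Qed.

Definition dual_vec (g : nat -> K) : V K := mkV g finitary0.
Definition e_dual (i : nat) : V K := dual_vec (delta i).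
Definition e_fin (i : nat) : V K := mkV (fun _ => 0) (finitary_delta i).

Definition basis (b : idx) : V K :=
  match b with inl j => e_dual j | inr j => e_fin j end.

Lemma fsumT_delta (f : nat -> K) i :
  \sum_(n \in [set: nat]) f n * delta i n = f i.
Proof.
rewrite (fsumT1 (a := i)) => [|n /negbTE ni].
all: by rewrite /delta ?eqxx ?mulr1 ?ni ?mulr0.
Qed.

Lemma pairing_e_fin (u : V K) i : pairing (e_fin i) u = vdual u i.
Proof.
by rewrite /pairing; under eq_fsbigr do rewrite /= mul0r add0r; apply: fsumT_delta.
Qed.

Lemma pairing_e_dual (u : V K) i : pairing (e_dual i) u = vfin u i.
Proof.
rewrite /pairing; under eq_fsbigr do rewrite /= mulr0 addr0.
rewrite (fsumT1 (a := i)) => [|n /negbTE ni].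
all: by rewrite /delta ?eqxx ?mul1r ?ni ?mul0r.
Qed.

Lemma finitary_mat_col (psi : mat K) (phi : V K -> V K) b :
  mat_action psi phi -> finitary (fun i => psi (inr i) b).
Proof.
move=> act; have [N phiN] := vfinP (phi (basis b)); exists N => i /phiN <-.
have [_ ->] := act (basis b) i.
case: b {phiN} => j /=; rewrite fsumT_delta fsbig1 ?add0r ?addr0 //.
all: by move=> n _; rewrite mulr0.
Qed.

Lemma finitary_mat_dual (psi : mat K) (phi : V K -> V K) g :
  mat_action psi phi ->
  finitary (fun i => \sum_(j \in [set: nat]) psi (inr i) (inl j) * g j).
Proof.
move=> act; have [N phiN] := vfinP (phi (dual_vec g)); exists N => i /phiN.
have [_ ->] := act (dual_vec g) i.
by rewrite [X in _ + X]fsbig1 ?addr0 // => n _; rewrite mulr0.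
Qed.

End CoordinateVectors.
Arguments e_fin {K} i.
Arguments e_dual {K} i.

Lemma pairing_split (K : comNzRingType) (w v : V K) :
  pairing w v = \sum_(j \in [set: nat]) vfin w j * vdual v j
              + \sum_(j \in [set: nat]) vdual w j * vfin v j.
Proof.
rewrite /pairing -fsumD; last 2 first.
- exact: finitaryMr (vfinP w).
- exact: finitaryMl (vfinP v).
by apply: eq_fsbigr => j _; rewrite addrC [vdual v j * _]mulrC.
Qed.

Lemma mat_of_adjoint (K : comNzRingType) (phi : V K -> V K) :
  (forall w, exists w', adj_rel phi w w') ->
  exists psi : mat K, in_J psi /\ mat_action psi phi.
Proof.
move=> /choice[adj adjP].
pose psi (a b : idx) : K :=
  let w := adj (match a with inl i => e_fin i | inr i => e_dual i end) in
  match b with inl j => vfin w j | inr j => vdual w j end.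
have act : mat_action psi phi.
  by move=> v i; rewrite -pairing_e_fin -pairing_e_dual !adjP !pairing_split.
exists psi; split=> //; split.
- by move=> i; apply: vfinP.
- by move=> j; apply: (finitary_mat_col (inr j) act).
- apply: finsupp2_of_finitary_mul => [i|j|g]; first exact: vfinP.
    exact: (finitary_mat_col (inl j) act).
  exact: finitary_mat_dual.
Qed.

Section MatrixAdjoint.
Variables (K : idomainType) (psi : mat K).
Hypothesis psiJ : in_J psi.

Local Notation A := (fun i j => psi (inl i) (inl j)).
Local Notation B := (fun i j => psi (inl i) (inr j)).
Local Notation C := (fun i j => psi (inr i) (inl j)).
Local Notation D := (fun i j => psi (inr i) (inr j)).

Definition adj_dual (w : V K) (j : nat) : K :=
  \sum_(i \in [set: nat]) vdual w i * D i j
  + \sum_(i \in [set: nat]) vfin w i * B i j.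
Definition adj_fin (w : V K) (j : nat) : K :=
  \sum_(i \in [set: nat]) vdual w i * C i j
  + \sum_(i \in [set: nat]) vfin w i * A i j.

Lemma finitary_adj_fin w : finitary (adj_fin w).
Proof.
have [Arow _ [Nc Csupp]] := psiJ; have [Nw wN] := vfinP w.
have [L AL] := uniformly_finitary Nw Arow.
exists (maxn Nc L) => j; rewrite geq_max => /andP[Ncj Lj].
rewrite /adj_fin !fsbig1 ?addr0 // => i _.
- by case: (ltnP i Nw) => [/AL -> //|/wN ->]; rewrite ?mulr0 ?mul0r.
- by rewrite Csupp ?mulr0 //; right.
Qed.

Definition mat_adjoint (w : V K) : V K := mkV (adj_dual w) (finitary_adj_fin w).

Lemma mat_adjointP phi :
  mat_action psi phi -> forall w, adj_rel phi w (mat_adjoint w).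
Proof.
move=> act w v; have [Arow Dcol Csupp] := psiJ.
set al := vdual w; set x := vfin w; set ga := vdual v; set y := vfin v.
have sC : finsupp2 (fun i j => al i * C i j * ga j) by apply: finsupp2_mid.
have sD : finsupp2 (fun i j => al i * D i j * y j).
  by apply: finsupp2_cols (vfinP v) _ => j; apply: finitaryMl.
have sA : finsupp2 (fun i j => x i * A i j * ga j).
  by apply: finsupp2_rows (vfinP w) _ => i; apply: finitaryMr.
have sB : finsupp2 (fun i j => x i * B i j * y j).
  by apply: finsupp2_rows (vfinP w) _ => i; apply: finitaryMl (vfinP v).
have lhs i : al i * vfin (phi v) i + vdual (phi v) i * x i =
    (al i * (\sum_(j \in [set: nat]) C i j * ga j)
     + al i * (\sum_(j \in [set: nat]) D i j * y j))
  + (x i * (\sum_(j \in [set: nat]) A i j * ga j)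
     + x i * (\sum_(j \in [set: nat]) B i j * y j)).
  by have [-> ->] := act v i; rewrite mulrDr [_ * x i]mulrC mulrDr.
have rhs j : adj_dual w j * y j + ga j * adj_fin w j =
    ((\sum_(i \in [set: nat]) al i * D i j) * y j
     + (\sum_(i \in [set: nat]) x i * B i j) * y j)
  + ((\sum_(i \in [set: nat]) al i * C i j) * ga j
     + (\sum_(i \in [set: nat]) x i * A i j) * ga j).
  by rewrite mulrDl [ga j * _]mulrC mulrDl.
rewrite /pairing /= (eq_fsbigr _ _ (in1W lhs)) (eq_fsbigr _ _ (in1W rhs)).
rewrite !fsumD; try apply: finitaryD;
  try exact: finitary_mulr_fsum; try exact: finitary_fsum_mulr.
by rewrite !fsum_transpose // addrACA addrC.
Qed.

End MatrixAdjoint.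

Lemma adj_rel_cancel (K : nzRingType) (f g : V K -> V K) (u w : V K) :
  cancel g f -> adj_rel f u w -> adj_rel g w u.
Proof. by move=> gK fuw v; rewrite -fuw gK. Qed.

Theorem theoremA8 (R : realType) (phi : V R[i] -> V R[i]) :
  in_GU phi <-> in_GtildeU phi.
Proof.
split.
- move=> [lin [phi' phiK phi'K] adj adj_onto].
  have [psi [psiJ act]] := mat_of_adjoint adj.
  have adj' w : exists w', adj_rel phi' w w'.
    by have [u uw] := adj_onto w; exists u; apply: adj_rel_cancel phi'K uw.
  have [psi' [psi'J act']] := mat_of_adjoint adj'.
  by exists psi, psi', phi'.
- move=> [psi [psi' [phi' [lin phiK phi'K [psiJ act] [psi'J act']]]]].
  split=> //; first by exists phi'.
  + by move=> w; exists (mat_adjoint psiJ w); apply: mat_adjointP.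
  + move=> w'; exists (mat_adjoint psi'J w').
    exact: adj_rel_cancel phiK (mat_adjointP psi'J act' w').
Qed.
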